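(* There exists a closed algebra on $\mathbb{N}$ whose clone of term operations is not a Borel subset of $\mathscr{O}$. Moreover, this algebra can be chosen so that all of its fundamental operations are unary.
   Context: Let $\mathbb{N}=\{0,1,2,\dots\}$. For $n\ge 1$ let $\mathscr{O}^{(n)}=\mathbb{N}^{\mathbb{N}^n}$ be the set of all $n$-ary functions on $\mathbb{N}$, and $\mathscr{O}=\bigcup_{n\ge1}\mathscr{O}^{(n)}$. Each $\mathscr{O}^{(n)}$ carries the product topology of the discrete topology on $\mathbb{N}$ (so it is homeomorphic to the Baire space), and $\mathscr{O}$ carries the sum (disjoint union) topology; $\mathscr{O}$ is a Polish space. A clone is a subset of $\mathscr{O}$ containing all projections and closed under composition. An algebra on $\mathbb{N}$ is given by a set $\mathscr{F}\subseteq\mathscr{O}$ of fundamental operations; it is called closed (resp. Borel) if $\mathscr{F}$ is a closed (resp. Borel) subset of $\mathscr{O}$. Its clone of term operations is the smallest clone containing $\mathscr{F}$. *)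

From mathcomp Require Import all_boot.
From Stdlib Require Import List.

Set Implicit Arguments.
Unset Strict Implicit.
Unset Printing Implicit Defensive.

(* An (n+1)-ary operation on nat: a map N^(n+1) -> N, tuples as 'I_(n+1) -> nat. *)
Definition op (n : nat) := ('I_n.+1 -> nat) -> nat.

Definition Ops := {n : nat & op n}.
Definition mkop (n : nat) (f : op n) : Ops := existT op n f.

Definition arity (h : Ops) : nat := (projT1 h).+1.

(* Open sets of the sum of the product-of-discrete topologies: U is open iff
   around every f in U (of arity n+1) there is a basic open neighbourhood,
   i.e. a finite set of inputs such that every g of the same arity agreeing
   with f on them is in U. *)
Definition is_open (U : Ops -> Prop) : Prop :=
  forall (n : nat) (f : op n), U (mkop f) ->
    exists pts : list ('I_n.+1 -> nat),
      forall g : op n, (forall x, In x pts -> g x = f x) -> U (mkop g).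

Definition is_closed (A : Ops -> Prop) : Prop := is_open (fun h => ~ A h).

Definition is_borel (A : Ops -> Prop) : Prop :=
  forall S : (Ops -> Prop) -> Prop,
    (forall B C : Ops -> Prop, (forall h, B h <-> C h) -> S B -> S C) ->
    (forall U, is_open U -> S U) ->
    (forall B, S B -> S (fun h => ~ B h)) ->
    (forall Bs : nat -> Ops -> Prop, (forall k, S (Bs k)) ->
        S (fun h => exists k, Bs k h)) ->
    S A.

Definition is_clone (C : Ops -> Prop) : Prop :=
  (forall (n : nat) (i : 'I_n.+1), C (mkop (fun x : 'I_n.+1 -> nat => x i))) /\
  (forall (n m : nat) (f : op n) (gs : 'I_n.+1 -> op m),
      C (mkop f) -> (forall i, C (mkop (gs i))) ->
      C (mkop (fun x : 'I_m.+1 -> nat => f (fun i => gs i x)))).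

Definition term_clone (F : Ops -> Prop) : Ops -> Prop :=
  fun h => forall C, is_clone C -> (forall g, F g -> C g) -> C h.

(* Call x : nat -> nat self-accepting if, read as a code of a closed relation, it accepts
   (x, y) for some y.  This set D is analytic, and by diagonalisation its complement is not,
   so D is not Borel: Borel sets are analytic with analytic complement.  The fundamental
   operations are the unary maps [forget_snd] and [pair_code x y] for the pairs (x, y)
   accepted by x, which form a closed set.  Since [forget_snd \o pair_code x y = code x] and
   every other composition of two generators is constant, [code x] is a term operation
   exactly when x is in D; as x |-> code x is continuous, a Borel clone would make D Borel. *)

From mathcomp Require Import all_boot zify.
From Stdlib Require Import Classical ClassicalEpsilon FunctionalExtensionality Eqdep_dec.

Set Implicit Arguments.
Unset Strict Implicit.
Unset Printing Implicit Defensive.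

Definition agree (x x' : nat -> nat) (n : nat) := forall m, m < n -> x m = x' m.

Lemma agree_sym x x' n : agree x x' n -> agree x' x n.
Proof. by move=> H m Hm; rewrite H. Qed.

Lemma agree_trans x x' x'' n : agree x x' n -> agree x' x'' n -> agree x x'' n.
Proof. by move=> H H' m Hm; rewrite H // H'. Qed.

Lemma agree_leq x x' n m : m <= n -> agree x x' n -> agree x x' m.
Proof. by move=> Hmn H k Hk; apply: H; apply: leq_trans Hmn. Qed.

Lemma agree_mkseq x x' n : agree x x' n <-> mkseq x n = mkseq x' n.
Proof.
split=> [H | E m Hm].
- by apply/eq_in_map => m; rewrite mem_iota add0n => /andP[_]; apply: H.
- by have := congr1 (fun s => nth 0 s m) E; rewrite !nth_mkseq.
Qed.

Definition baire_open (V : (nat -> nat) -> Prop) :=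
  forall x, V x -> exists n, forall x', agree x x' n -> V x'.

Definition baire_closed (A : (nat -> nat) -> Prop) :=
  forall x, ~ A x -> exists n, forall x', agree x x' n -> ~ A x'.

Lemma baire_closed_eq f : baire_closed (fun w => w = f).
Proof.
move=> w Hwf; have [k Hk] : exists k, w k <> f k.
  apply: NNPP => Hall; apply: Hwf; apply: functional_extensionality => k.
  by apply: NNPP => Hk; apply: Hall; exists k.
by exists k.+1 => w' Hw E; apply: Hk; rewrite Hw // E.
Qed.

Lemma baire_closedU A B :
  baire_closed A -> baire_closed B -> baire_closed (fun x => A x \/ B x).
Proof.
move=> HA HB x /not_or_and [/HA [n Hn] /HB [m Hm]].
exists (maxn n m) => x' Hx [/Hn | /Hm]; apply; apply: agree_leq Hx; lia.
Qed.

Definition closed_rel (P : (nat -> nat) -> (nat -> nat) -> Prop) :=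
  forall x y, ~ P x y ->
    exists n, forall x' y', agree x x' n -> agree y y' n -> ~ P x' y'.

Definition analytic (A : (nat -> nat) -> Prop) :=
  exists P, closed_rel P /\ forall x, A x <-> exists y, P x y.

Definition bianalytic (A : (nat -> nat) -> Prop) :=
  analytic A /\ analytic (fun x => ~ A x).

Lemma analytic_ext A A' : (forall x, A x <-> A' x) -> analytic A -> analytic A'.
Proof. by move=> HA [P [HP HPA]]; exists P; split => // x; rewrite -HA. Qed.

Lemma bianalytic_ext A A' : (forall x, A x <-> A' x) -> bianalytic A -> bianalytic A'.
Proof.
move=> HA [H1 H2]; split; first exact: analytic_ext H1.
by apply: analytic_ext H2 => x; rewrite HA.
Qed.

Lemma bianalyticC A : bianalytic A -> bianalytic (fun x => ~ A x).
Proof.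
move=> [H1 H2]; split => //; apply: analytic_ext H1 => x.
by split; [tauto | exact: NNPP].
Qed.

Lemma closed_analytic A : baire_closed A -> analytic A.
Proof.
move=> HA; exists (fun x (_ : nat -> nat) => A x); split.
- by move=> x y /HA [n Hn]; exists n => x' y' /Hn.
- by move=> x; split => [Hx | [_ //]]; exists id.
Qed.

(* The witness [y] of [V x] is the radius [y 0] of a basic neighbourhood of [x] inside [V]. *)
Lemma open_analytic V : baire_open V -> analytic V.
Proof.
move=> HV; exists (fun x y => forall x', agree x x' (y 0) -> V x'); split.
- move=> x y HP; exists (y 0).+1 => x' y' Hx Hy HP'; apply: HP => x'' Hx''.
  rewrite -(Hy 0) // in HP'; apply: HP'; apply: agree_trans Hx''.
  exact/agree_sym/(agree_leq _ Hx).
- move=> x; split => [/HV [n Hn] | [y Hy]]; first by exists (fun _ => n).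
  by apply: Hy.
Qed.

Lemma open_bianalytic V : baire_open V -> bianalytic V.
Proof.
move=> HV; split; first exact: open_analytic.
apply: closed_analytic => x /NNPP /HV [n Hn].
by exists n => x' /Hn Hx; apply.
Qed.

Lemma analytic_bigcup (A : nat -> (nat -> nat) -> Prop) :
  (forall k, analytic (A k)) -> analytic (fun x => exists k, A k x).
Proof.
move=> /choice [Ps HPs].
exists (fun x z => Ps (z 0) x (fun j => z j.+1)); split.
- move=> x z /(proj1 (HPs (z 0))) [n Hn]; exists n.+1 => x' z' Hx Hz.
  rewrite -(Hz 0) //; apply: Hn; first exact: agree_leq (leqnSn n) Hx.
  by move=> m Hm; apply: Hz.
- move=> x; split.
  + move=> [k /(proj2 (HPs k)) [y Hy]].
    by exists (fun j => if j is j'.+1 then y j' else k).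
  + by move=> [z Hz]; exists (z 0); apply/(proj2 (HPs (z 0))); exists (fun j => z j.+1).
Qed.

(* Countably many witnesses are interleaved into one along the pairing
   [pickle : nat * nat -> nat]. *)
Lemma analytic_bigcap (A : nat -> (nat -> nat) -> Prop) :
  (forall k, analytic (A k)) -> analytic (fun x => forall k, A k x).
Proof.
move=> /choice [Ps HPs].
exists (fun x z => forall k, Ps k x (fun j => z (pickle (k, j)))); split.
- move=> x z /not_all_ex_not [k /(proj1 (HPs k)) [n Hn]].
  exists (maxn n (\max_(j < n) pickle (k, j)).+1) => x' z' Hx Hz HP'.
  apply: (Hn x' (fun j => z' (pickle (k, j)))) (HP' k).
    exact: agree_leq (leq_maxl _ _) Hx.
  move=> j Hj; apply: Hz.
  have : pickle (k, j) <= \max_(i < n) pickle (k, i).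
    exact: (@leq_bigmax _ (fun i : 'I_n => pickle (k, i)) (Ordinal Hj)).
  lia.
- move=> x; split=> [HA | [z Hz] k]; last by apply/(proj2 (HPs k)); eexists; apply: Hz.
  have /choice [Y HY] : forall k, exists y, Ps k x y by move=> k; apply/(proj2 (HPs k)).
  exists (fun m => if (unpickle m : option (nat * nat)) is Some (k, j) then Y k j else 0).
  move=> k; have -> // : (fun j => if (unpickle (pickle (k, j)) : option (nat * nat))
      is Some (k0, j0) then Y k0 j0 else 0) = Y k.
  by apply: functional_extensionality => j; rewrite pickleK.
Qed.

Lemma bianalytic_bigcup (A : nat -> (nat -> nat) -> Prop) :
  (forall k, bianalytic (A k)) -> bianalytic (fun x => exists k, A k x).
Proof.
move=> H; split; first by apply: analytic_bigcup => k; case: (H k).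
apply: analytic_ext (analytic_bigcap (fun k => proj2 (H k))) => x.
by split=> [Hx [k /Hx] | Hx k Hk] //; apply: Hx; exists k.
Qed.

(* [c] codes the closed relation whose complement is the union of the basic boxes
   [mkseq x n = s, mkseq y n = t] with [c (pickle (s, t)) = 0]. *)
Definition code_accepts (c x y : nat -> nat) :=
  forall n, c (pickle (mkseq x n, mkseq y n)) != 0.

Lemma closed_rel_code P : closed_rel P -> exists c, forall x y, P x y <-> code_accepts c x y.
Proof.
move=> HP; exists (fun k => if excluded_middle_informative
  (exists x y n, P x y /\ pickle (mkseq x n, mkseq y n) = k) then 1 else 0).
move=> x y; split=> [Hxy n | Hc].
- by case: excluded_middle_informative => // [[]]; exists x, y, n.
- apply: NNPP => /HP [n Hn]; move: (Hc n).
  case: excluded_middle_informative => // [[x' [y' [n' [Hxy' /(pcan_inj pickleK) [Ex Ey]]]]]] _.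
  have En : n' = n by rewrite -(size_mkseq x' n') -(size_mkseq x n) Ex.
  by subst n'; apply: (Hn x' y') => //; apply/agree_sym/agree_mkseq.
Qed.

Definition self_accepting (x : nat -> nat) := exists y, code_accepts x x y.

Lemma self_accepting_not_coanalytic : ~ analytic (fun x => ~ self_accepting x).
Proof.
move=> [P [/closed_rel_code [c Hc] HA]].
have : ~ self_accepting c <-> self_accepting c.
  by rewrite (HA c); split=> [] [y /Hc Hy]; exists y.
tauto.
Qed.

Lemma closed_rel_self_code : closed_rel (fun x y => code_accepts x x y).
Proof.
move=> x y /not_all_ex_not [n /negP]; rewrite negbK => /eqP Hx0.
set j := pickle _ in Hx0.
exists (maxn n j.+1) => x' y' Hx Hy /(_ n).
have /agree_mkseq <- : agree x x' n by apply: agree_leq Hx; apply: leq_maxl.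
have /agree_mkseq <- : agree y y' n by apply: agree_leq Hy; apply: leq_maxl.
by rewrite -/j -Hx ?Hx0 //; lia.
Qed.

Lemma borel_preimage_bianalytic (e : (nat -> nat) -> Ops) (A : Ops -> Prop) :
  (forall U, is_open U -> baire_open (fun x => U (e x))) ->
  is_borel A -> bianalytic (fun x => A (e x)).
Proof.
move=> He HA; apply: (HA (fun B => bianalytic (fun x => B (e x)))) => [B C HBC||B|Bs].
- by apply: bianalytic_ext => x; apply: HBC.
- by move=> U /He /open_bianalytic.
- exact: bianalyticC.
- exact: (bianalytic_bigcup (A := fun k x => Bs k (e x))).
Qed.

Definition unop (w : nat -> nat) : Ops := mkop (fun v : 'I_1 -> nat => w (v ord0)).

Lemma mkop_inj n (f g : op n) : mkop f = mkop g -> f = g.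
Proof. exact: (inj_pair2_eq_dec _ PeanoNat.Nat.eq_dec op n f g). Qed.

Lemma mkop_arity n m (f : op n) (g : op m) : mkop f = mkop g -> n = m.
Proof. exact: (congr1 (@projT1 _ _)). Qed.

Lemma mkop0_unop (f : op 0) : mkop f = unop (fun k => f (fun _ => k)).
Proof.
congr mkop; apply: functional_extensionality => v; congr f.
by apply: functional_extensionality => i; rewrite (ord1 i).
Qed.

Section EssentiallyUnaryClone.

Variable M : (nat -> nat) -> Prop.
Hypothesis M_id : M id.
Hypothesis M_comp : forall w w', M w -> M w' -> M (w \o w').

Definition ess_unary (h : Ops) :=
  exists n (i : 'I_n.+1) w, M w /\ h = mkop (fun v : 'I_n.+1 -> nat => w (v i)).

Lemma ess_unary_clone : is_clone ess_unary.
Proof.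
split=> [n i | n m f gs [n0 [i0 [w [Hw He]]]] Hgs]; first by exists n, i, id.
have E := mkop_arity He; subst n0; move/mkop_inj: He => ->.
have [n1 [i1 [w' [Hw' He']]]] := Hgs i0.
have E := mkop_arity He'; subst n1; move/mkop_inj: He' => Hg.
by exists m, i1, (w \o w'); split; [apply: M_comp | rewrite Hg].
Qed.

Lemma ess_unary_unop w : ess_unary (unop w) -> M w.
Proof.
move=> [n [i [w0 [Hw0 He]]]].
have E := mkop_arity He; subst n; move/mkop_inj: He => Hf.
suff -> : w = w0 by [].
apply: functional_extensionality => k.
by have := congr1 (fun f => f (fun _ => k)) Hf.
Qed.

End EssentiallyUnaryClone.

Lemma term_clone_comp_unop F w w' :
  term_clone F (unop w) -> term_clone F (unop w') -> term_clone F (unop (w \o w')).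
Proof.
move=> Hw Hw' C HC HF.
exact: (proj2 HC 0 0 _ (fun _ => _) (Hw C HC HF) (fun _ => Hw' C HC HF)).
Qed.

Definition dec (p : nat) : nat * nat := odflt (0, 0) (unpickle p).

(* Residues mod 4 tag the role of a number: [4 m] is the position [m], [4 p + 1] carries
   the code [p] of a pair, [4 a + 2] carries a value [a]; [3] is a sink fixed by all maps. *)
Definition forget_snd (k : nat) : nat :=
  if k %% 4 == 1 then 4 * (dec (k %/ 4)).1 + 2 else 3.

Definition pair_code (x y : nat -> nat) (k : nat) : nat :=
  if k %% 4 == 0 then 4 * pickle (x (k %/ 4), y (k %/ 4)) + 1 else 3.

Definition code (x : nat -> nat) (k : nat) : nat :=
  if k %% 4 == 0 then 4 * x (k %/ 4) + 2 else 3.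

Lemma dec_pair_tag (p : nat * nat) : dec ((4 * pickle p + 1) %/ 4) = p.
Proof. by rewrite (_ : _ %/ 4 = pickle p) ?/dec ?pickleK //; lia. Qed.

Lemma code_4m x m : code x (4 * m) = 4 * x m + 2.
Proof. by rewrite /code mulnC modnMl mulnK. Qed.

Lemma pair_code_4m x y m : pair_code x y (4 * m) = 4 * pickle (x m, y m) + 1.
Proof. by rewrite /pair_code mulnC modnMl mulnK. Qed.

Lemma forget_snd_pair_code x y : forget_snd \o pair_code x y = code x.
Proof.
apply: functional_extensionality => k; rewrite /= /pair_code /code.
case: ifP => // _; rewrite /forget_snd dec_pair_tag.
by rewrite (_ : _ %% 4 = 1) //; lia.
Qed.

Definition accepts_only (c : nat) (w : nat -> nat) := forall k, k %% 4 != c -> w k = 3.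
Definition lands_in (d : nat) (w : nat -> nat) := forall k, w k = 3 \/ w k %% 4 = d.

Lemma sink_comp c d w w' : c != d -> c != 3 ->
  accepts_only c w -> lands_in d w' -> w \o w' = (fun _ => 3).
Proof.
move=> Hcd Hc3 Hw Hw'; apply: functional_extensionality => k /=.
by apply: Hw; case: (Hw' k) => ->; rewrite // eq_sym.
Qed.

Lemma accepts_only_forget_snd : accepts_only 1 forget_snd.
Proof. by move=> k; rewrite /forget_snd => /negbTE ->. Qed.

Lemma lands_in_forget_snd : lands_in 2 forget_snd.
Proof. by move=> k; rewrite /forget_snd; case: ifP => _; [right; lia | left]. Qed.

Lemma accepts_only_pair_code x y : accepts_only 0 (pair_code x y).
Proof. by move=> k; rewrite /pair_code => /negbTE ->. Qed.

Lemma lands_in_pair_code x y : lands_in 1 (pair_code x y).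
Proof. by move=> k; rewrite /pair_code; case: ifP => _; [right; lia | left]. Qed.

Lemma accepts_only_code x : accepts_only 0 (code x).
Proof. by move=> k; rewrite /code => /negbTE ->. Qed.

Lemma lands_in_code x : lands_in 2 (code x).
Proof. by move=> k; rewrite /code; case: ifP => _; [right; lia | left]. Qed.

Definition generator (w : nat -> nat) :=
  w = forget_snd \/ exists x y, code_accepts x x y /\ w = pair_code x y.

Definition fundamental (h : Ops) := exists w, generator w /\ h = unop w.

Definition proper_term (w : nat -> nat) :=
  generator w \/ exists x, self_accepting x /\ w = code x.

Definition unary_term (w : nat -> nat) :=
  w = id \/ w = (fun _ => 3) \/ proper_term w.

Lemma proper_term3 w : proper_term w -> w 3 = 3.
Proof. by case=> [[->|[x [y [_ ->]]]]|[x [_ ->]]]. Qed.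

#[local] Hint Resolve accepts_only_forget_snd lands_in_forget_snd accepts_only_pair_code
  lands_in_pair_code accepts_only_code lands_in_code : core.

(* Only [forget_snd] accepts the tag [1] that [pair_code] produces; every other
   composition of proper terms collapses to the sink. *)
Lemma proper_term_comp w w' : proper_term w -> proper_term w' -> unary_term (w \o w').
Proof.
case=> [[->|[x [y [_ ->]]]]|[x [_ ->]]] [[->|[x' [y' [Hxy' ->]]]]|[x' [_ ->]]].
all: try by right; right; right; exists x'; split; [exists y' | rewrite forget_snd_pair_code].
all: by right; left; (eapply sink_comp; [| |eauto|eauto]).
Qed.

Lemma unary_term_comp w w' : unary_term w -> unary_term w' -> unary_term (w \o w').
Proof.
case=> [->|[->|Hw]]; first by []; first by right; left.
case=> [->|[->|Hw']]; first by right; right.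
- by right; left; apply: functional_extensionality => k /=; rewrite proper_term3.
- exact: proper_term_comp.
Qed.

Lemma code_inj : injective code.
Proof.
move=> x x' E; apply: functional_extensionality => m.
by have := congr1 (fun f => f (4 * m)) E; rewrite /= !code_4m; lia.
Qed.

Lemma term_clone_code x : term_clone fundamental (unop (code x)) <-> self_accepting x.
Proof.
split=> [Hx | [y Hxy]].
- have : unary_term (code x).
    apply: (@ess_unary_unop unary_term); apply: Hx => [|_ [w [Hw ->]]].
    - exact: ess_unary_clone (or_introl erefl) unary_term_comp.
    - by exists 0, ord0, w; split; [right; right; left|].
  have code0 : code x 0 = 4 * x 0 + 2 := code_4m x 0.
  case=> [/(congr1 (fun f => f 1)) // | [/(congr1 (fun f => f 0)) /= | ]].
    by rewrite code0; lia.
  case=> [[/(congr1 (fun f => f 0)) | [x' [y' [_ /(congr1 (fun f => f 0)) /=]]]] | ].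
  - by rewrite code0 (_ : forget_snd 0 = 3) //; lia.
  - by rewrite code0 (pair_code_4m x' y' 0); lia.
  - by move=> [x' [Hx' /code_inj ->]].
- rewrite -(forget_snd_pair_code x y); apply: term_clone_comp_unop => C _ HF; apply: HF.
    by exists forget_snd; split; first left.
  by exists (pair_code x y); split; first (right; exists x, y).
Qed.

Definition decode_fst (u : nat -> nat) (m : nat) : nat := (dec (u (4 * m) %/ 4)).1.
Definition decode_snd (u : nat -> nat) (m : nat) : nat := (dec (u (4 * m) %/ 4)).2.

(* The value of the decoded pair code at [k] depends on [u k] alone. *)
Lemma pair_code_decode u x y k :
  pair_code x y k = u k -> pair_code (decode_fst u) (decode_snd u) k = u k.
Proof.
rewrite /pair_code; case: ifP => // /eqP Hk E.
rewrite /decode_fst /decode_snd (_ : 4 * (k %/ 4) = k); last by lia.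
by rewrite -E dec_pair_tag.
Qed.

Lemma agree_pair_code x y x' y' n :
  agree (pair_code x y) (pair_code x' y') (4 * n) -> agree x x' n /\ agree y y' n.
Proof.
move=> H; suff Hm : forall m, m < n -> (x m, y m) = (x' m, y' m).
  by split=> m /Hm [].
move=> m Hm; apply: (pcan_inj pickleK).
by have := H (4 * m); rewrite !pair_code_4m; lia.
Qed.

Lemma pair_codes_closed :
  baire_closed (fun u => exists x y, code_accepts x x y /\ u = pair_code x y).
Proof.
move=> u Hu.
set v := pair_code (decode_fst u) (decode_snd u).
case: (classic (exists k, u k <> v k)) => [[k Hk] | Hall].
  exists k.+1 => h Hh [x [y [_ Eh]]]; apply: Hk; symmetry.
  by apply: (pair_code_decode (x := x) (y := y)); rewrite -Eh Hh.
have Eu : u = v.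
  apply: functional_extensionality => k; apply: NNPP => Hk; apply: Hall; by exists k.
have /closed_rel_self_code [n Hn] : ~ code_accepts (decode_fst u) (decode_fst u) (decode_snd u).
  by move=> Hacc; apply: Hu; exists (decode_fst u), (decode_snd u).
exists (4 * n) => h Hh [x [y [Hxy Eh]]]; rewrite Eu Eh in Hh.
by have [Hx Hy] := agree_pair_code Hh; apply: (Hn x y).
Qed.

Lemma generator_closed : baire_closed generator.
Proof. exact (baire_closedU (@baire_closed_eq forget_snd) pair_codes_closed). Qed.

Lemma fundamental_closed : is_closed fundamental.
Proof.
move=> [|n] f Hf; last first.
  by exists nil => g _ [w [_ /mkop_arity]].
have /generator_closed [N HN] : ~ generator (fun k => f (fun _ => k)).
  by move=> Hg; apply: Hf; rewrite mkop0_unop; exists (fun k => f (fun _ => k)).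
exists (List.map (fun k _ => k) (List.seq 0 N)) => g Hg; rewrite mkop0_unop.
move=> [w [Hw /mkop_inj Ew]]; apply: (HN w) => // m Hm.
rewrite -(congr1 (fun F => F (fun _ => m)) Ew) /= Hg //.
by apply: List.in_map; apply/List.in_seq; lia.
Qed.

Lemma list_bounded (T : Type) (f : T -> nat) (l : list T) :
  exists N, forall t, List.In t l -> f t < N.
Proof.
elim: l => [|a l [N HN]]; first by exists 0.
exists (maxn N (f a).+1) => t /= [<-|/HN]; lia.
Qed.

Lemma unop_continuous U : is_open U -> baire_open (fun u => U (unop u)).
Proof.
move=> HU u /HU [pts Hpts]; have [N HN] := list_bounded (fun v => v ord0) pts.
by exists N => u' Hu; apply: Hpts => v /HN /Hu.
Qed.

Lemma agree_code x x' n : agree x x' n -> agree (code x) (code x') n.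
Proof.
move=> H k Hk; rewrite /code (H (k %/ 4)) //.
by apply: leq_ltn_trans Hk; apply: leq_div.
Qed.

Lemma code_continuous V : baire_open V -> baire_open (fun x => V (code x)).
Proof. by move=> HV x /HV [n Hn]; exists n => x' /agree_code /Hn. Qed.

Theorem mainTheorem1 :
  exists F : Ops -> Prop,
    is_closed F /\
    (forall h, F h -> arity h = 1) /\
    ~ is_borel (term_clone F).
Proof.
exists fundamental; split; first exact: fundamental_closed.
split=> [h [w [_ ->]] // | Hborel].
have [_ Hco] := borel_preimage_bianalytic (e := fun x => unop (code x))
  (fun U HU => code_continuous (unop_continuous HU)) Hborel.
apply: self_accepting_not_coanalytic; apply: analytic_ext Hco => x.
by have := term_clone_code x; tauto.
Qed.
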